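(* Let $G$ be a finite group, $H\le G$ a subgroup, and $k$ a field such that $kH$ is a separable $k$-algebra. Suppose there are elements $g'_1,\ldots,g'_r\in G$ such that $\mathrm{core}_H(G)=H^{g'_1}\cap\cdots\cap H^{g'_r}\cap H$. Then the h-depth satisfies $d_h(kH,kG)\le 2r+3$.
   Context: $H^g=g^{-1}Hg$ and $\mathrm{core}_H(G)=\bigcap_{g\in G}H^g$. Modules $X,Y$ are similar if each is isomorphic to a direct summand of a finite direct sum of copies of the other. For a ring extension $B\subseteq A$, let $A^{\otimes_B n}$ be the $n$-fold tensor power of $A$ over $B$, viewed as an $A$-$A$-bimodule. The extension has h-depth $2n-1$ ($n\ge1$) if $A^{\otimes_B n}\sim A^{\otimes_B(n+1)}$ as $A$-$A$-bimodules; $d_h(B,A)$ is the least such odd number ($\infty$ if none). *)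

From HB Require Import structures.
From mathcomp Require Import all_boot all_order all_algebra all_fingroup.
Set Implicit Arguments. Unset Strict Implicit. Unset Printing Implicit Defensive.
Import GRing.Theory.
Local Open Scope ring_scope.

(* The group G is the whole finGroupType gT; the group algebra kG has the
   k-basis gT.  The k-tensor power (kG)^{(x)_k n} has the k-basis of n-tuples
   of group elements, represented as {ffun 'I_n -> gT}.  Vectors of a free
   k-space with finite basis T are functions T -> k. *)

Definition tbasis (gT : finGroupType) (n : nat) := {ffun 'I_n -> gT}.

Definition ldact (gT : finGroupType) (n : nat) (g : gT) (t : tbasis gT n)
  : tbasis gT n :=
  [ffun j : 'I_n => if nat_of_ord j == 0%N then (g * t j)%g else t j].

Definition rdact (gT : finGroupType) (n : nat) (g : gT) (t : tbasis gT n)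
  : tbasis gT n :=
  [ffun j : 'I_n => if nat_of_ord j == n.-1 then (t j * g)%g else t j].

Definition unitv (k : fieldType) (T : finType) (s : T) : T -> k :=
  fun t => (t == s)%:R.

(* Generators of the kernel of (kG)^{(x)_k n} ->> (kG)^{(x)_{kH} n}:
   for i.+1 < n, h in H:   ... (x) g_i h (x) g_{i+1} (x) ...
                         - ... (x) g_i (x) h g_{i+1} (x) ...
   (kH is spanned by H, kG by G, so these span the balancing relations);
   indices not satisfying the side condition give the zero vector. *)
Definition tens_rel (k : fieldType) (gT : finGroupType) (H : {set gT}) (n : nat)
  (r : 'I_n * gT * tbasis gT n) : tbasis gT n -> k :=
  let: (i, h, t) := r in
  if ((nat_of_ord i).+1 < n)%N && (h \in H) then
    fun u =>
      unitv k [ffun j : 'I_n => if nat_of_ord j == nat_of_ord i then (t j * h)%g else t j] u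
    - unitv k [ffun j : 'I_n => if nat_of_ord j == (nat_of_ord i).+1 then (h * t j)%g else t j] u
  else fun _ => 0.

Definition in_span (k : fieldType) (T R : finType) (w : R -> T -> k) (v : T -> k) : Prop :=
  exists c : R -> k, forall t, v t = \sum_(r : R) c r * w r t.

(* v lies in the relation subspace W_n, i.e. v = 0 in (kG)^{(x)_{kH} n} *)
Definition tens_zero (k : fieldType) (gT : finGroupType) (H : {set gT}) (n : nat)
  (v : tbasis gT n -> k) : Prop :=
  in_span (@tens_rel k gT H n) v.

Definition vmap (k : fieldType) (T1 T2 : finType) (F : T1 -> T2 -> k) (v : T1 -> k)
  : T2 -> k :=
  fun t => \sum_(s : T1) v s * F s t.

Definition bmap (k : fieldType) (T : finType) (sigma : T -> T) (v : T -> k) : T -> k :=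
  fun t' => \sum_(t : T | sigma t == t') v t.

(* F induces a well-defined kG-kG-bimodule map
   (kG)^{(x)_{kH} n1} -> (kG)^{(x)_{kH} n2}  (every such map lifts to some F) *)
Definition tens_hom (k : fieldType) (gT : finGroupType) (H : {set gT}) (n1 n2 : nat)
  (F : tbasis gT n1 -> tbasis gT n2 -> k) : Prop :=
  [/\ forall r, tens_zero H (vmap F (@tens_rel k gT H n1 r)),
      forall (g : gT) (s : tbasis gT n1),
        tens_zero H (fun t => F (ldact g s) t - bmap (ldact g) (F s) t)
    & forall (g : gT) (s : tbasis gT n1),
        tens_zero H (fun t => F (rdact g s) t - bmap (rdact g) (F s) t)].

(* (kG)^{(x)_{kH} n1} is isomorphic, as a kG-kG-bimodule, to a direct summand of
   a finite direct sum of m copies of (kG)^{(x)_{kH} n2}: there are bimodule maps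
   phi_j : X -> Y, psi_j : Y -> X (j < m) with sum_j psi_j o phi_j = id_X. *)
Definition tens_summand (k : fieldType) (gT : finGroupType) (H : {set gT}) (n1 n2 : nat)
  : Prop :=
  exists m : nat,
  exists Phi : 'I_m -> tbasis gT n1 -> tbasis gT n2 -> k,
  exists Psi : 'I_m -> tbasis gT n2 -> tbasis gT n1 -> k,
  [/\ forall j, tens_hom H (Phi j),
      forall j, tens_hom H (Psi j)
    & forall s : tbasis gT n1,
        tens_zero H (fun t => \sum_(j < m) vmap (Psi j) (Phi j s) t - unitv k s t)].

Definition tens_similar (k : fieldType) (gT : finGroupType) (H : {set gT}) (n1 n2 : nat)
  : Prop :=
  tens_summand k H n1 n2 /\ tens_summand k H n2 n1.

(* d_h(kH, kG) <= d : some n >= 1 with 2n-1 <= d has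
   (kG)^{(x)_{kH} n} ~ (kG)^{(x)_{kH} (n+1)} *)
Definition hdepth_le (k : fieldType) (gT : finGroupType) (H : {set gT}) (d : nat) : Prop :=
  exists n : nat, [/\ (0 < n)%N, (n.*2.-1 <= d)%N & tens_similar k H n n.+1].

(* kH is a separable k-algebra: there is a separability element
   e = sum_{x,y in H} e(x,y) x (x) y in kH (x)_k kH with
   mu(e) = sum e(x,y) xy = 1 and h e = e h for all h in H. *)
Definition grpalg_separable (k : fieldType) (gT : finGroupType) (H : {group gT}) : Prop :=
  exists e : gT -> gT -> k,
  [/\ forall x y, ~~ ((x \in H) && (y \in H)) -> e x y = 0,
      forall z : gT, \sum_(x in H) \sum_(y in H | (x * y)%g == z) e x y
                       = (z == 1%g)%:R
    & forall h x y, h \in H -> x \in H -> y \in H ->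
        e (h^-1 * x)%g y = e x (y * h^-1)%g].

(* Write X_n for the n-fold tensor power of kG over kH.  X_(n+2) is a direct
   summand of X_(n+3): insert a 1 before the last factor, then multiply the
   last two factors back together.  Conversely, X_(r+3) embeds into a sum of
   copies of X_(r+2), one for each (r+1)-tuple w of group elements: the w-th
   component sends a (x) w_0 (x) ... (x) w_r (x) b to
   a (x) gs_0^-1 (x) gs_0 gs_1^-1 (x) ... (x) gs_(r-1) (w_0 ... w_r) b,
   averaged over H^(r+3) so that it is balanced; separability of kH makes |H|
   invertible in k.  The inverse map is well defined because a tensor
   a (x) gs_0^-1 (x) ... (x) gs_(r-1) b determines (a, b) only up to
   (a z, z^-1 b) with z in H and in every H^(gs_i), i.e. in the core, and
   core elements slide through any tensor.  So X_(r+2) ~ X_(r+3), which is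
   h-depth 2(r+2) - 1. *)

From mathcomp Require Import all_boot all_order all_algebra all_fingroup.
From mathcomp Require Import zify.
Set Implicit Arguments. Unset Strict Implicit. Unset Printing Implicit Defensive.
Import GRing.Theory.

Section Tuples.
Variables (gT : finGroupType) (m : nat).
Implicit Types (s t a b h : tbasis gT m) (g : gT).
Local Open Scope group_scope.

Definition entry t (j : nat) : gT := if insub j is Some i then t i else 1.

Lemma entryE t (i : 'I_m) : entry t i = t i.
Proof. by rewrite /entry valK. Qed.

Lemma entry_ord t j (jm : (j < m)%N) : entry t j = t (Ordinal jm).
Proof. by rewrite -entryE. Qed.

Lemma entry_ge t j : (m <= j)%N -> entry t j = 1.
Proof. by move=> mj; rewrite /entry insubN // -leqNgt. Qed.

Lemma entry_ffun (F : nat -> gT) j :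
  entry [ffun i : 'I_m => F i] j = if (j < m)%N then F j else 1.
Proof. by rewrite /entry; case: insubP => [i -> <-|/negbTE ->]; rewrite ?ffunE. Qed.

Lemma entry_inj s t : (forall j, (j < m)%N -> entry s j = entry t j) -> s = t.
Proof. by move=> e; apply/ffunP => i; rewrite -!entryE e. Qed.

Lemma entry_on (H : {group gT}) t j : t \in ffun_on H -> entry t j \in H.
Proof. by move/ffun_onP => tH; rewrite /entry; case: insub => [i|]; rewrite ?group1. Qed.

Definition tmul a b : tbasis gT m := [ffun j => a j * b j].
Definition tinv a : tbasis gT m := [ffun j => (a j)^-1].
Definition tone : tbasis gT m := [ffun=> 1].

Lemma entry_tmul a b j : entry (tmul a b) j = entry a j * entry b j.
Proof. by rewrite /entry; case: insub => [i|]; rewrite ?ffunE ?mulg1. Qed.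

Lemma entry_tone j : entry tone j = 1.
Proof. by rewrite /entry; case: insub => [i|]; rewrite ?ffunE. Qed.

Lemma tmul_on (H : {group gT}) a b :
  a \in ffun_on H -> b \in ffun_on H -> tmul a b \in ffun_on H.
Proof. by move=> /ffun_onP aH /ffun_onP bH; apply/ffun_onP => j; rewrite ffunE groupM. Qed.

Lemma tinv_on (H : {group gT}) a : a \in ffun_on H -> tinv a \in ffun_on H.
Proof. by move=> /ffun_onP aH; apply/ffun_onP => j; rewrite ffunE groupV. Qed.

Lemma tone_on (H : {group gT}) : tone \in ffun_on H.
Proof. by apply/ffun_onP => j; rewrite ffunE group1. Qed.

Lemma tmul_inj a : injective (tmul a).
Proof. by move=> b c /ffunP e; apply/ffunP => j; move: (e j); rewrite !ffunE => /mulgI. Qed.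

(* The action of H^m on basis tensors g_0 (x) ... (x) g_(m-1) whose orbits are
   the basis elements of the tensor power over kH: h_j multiplies g_j on the
   right and g_(j+1) by h_j^-1 on the left; the last coordinate of h is unused. *)
Definition lfac h j := if j is j'.+1 then entry h j' else 1.
Definition rfac h j := if (j.+1 < m)%N then entry h j else 1.

Definition balance h s : tbasis gT m := [ffun j : 'I_m => (lfac h j)^-1 * s j * rfac h j].

Lemma entry_balance h s j :
  (j < m)%N -> entry (balance h s) j = (lfac h j)^-1 * entry s j * rfac h j.
Proof. by move=> jm; rewrite !(entry_ord _ jm) ffunE. Qed.

Lemma balance_mul a b s : balance a (balance b s) = balance (tmul b a) s.
Proof.
apply/ffunP => j; rewrite !ffunE /lfac /rfac.
by case: (nat_of_ord j) => [|j']; rewrite ?entry_tmul; case: ifP => _;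
  rewrite ?mulg1 ?invg1 ?mul1g ?invMg ?mulgA.
Qed.

Lemma balance1 s : balance tone s = s.
Proof.
apply/ffunP => j; rewrite !ffunE /lfac /rfac.
by case: (nat_of_ord j) => [|j']; case: ifP => _; rewrite ?entry_tone ?invg1 ?mulg1 ?mul1g.
Qed.

Lemma balanceK h s : balance (tinv h) (balance h s) = s.
Proof.
rewrite balance_mul (_ : tmul h (tinv h) = tone) ?balance1 //.
by apply/ffunP => j; rewrite !ffunE mulgV.
Qed.

Definition bal_equiv (H : {group gT}) s s' :=
  [exists h, (h \in ffun_on H) && (s' == balance h s)].

Lemma bal_equivP (H : {group gT}) s s' :
  reflect (exists2 h, h \in ffun_on H & s' = balance h s) (bal_equiv H s s').
Proof.
apply: (iffP existsP) => [[h /andP[hH /eqP ->]]|[h hH ->]]; exists h => //.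
by rewrite hH eqxx.
Qed.

Lemma bal_equiv_balance (H : {group gT}) h s : h \in ffun_on H -> bal_equiv H s (balance h s).
Proof. by move=> hH; apply/bal_equivP; exists h. Qed.

Lemma bal_equiv_refl (H : {group gT}) s : bal_equiv H s s.
Proof. by apply/bal_equivP; exists tone; rewrite ?tone_on ?balance1. Qed.

Lemma bal_equiv_sym (H : {group gT}) s s' : bal_equiv H s s' -> bal_equiv H s' s.
Proof.
by case/bal_equivP => h hH ->; apply/bal_equivP; exists (tinv h); rewrite ?tinv_on ?balanceK.
Qed.

Lemma bal_equiv_trans (H : {group gT}) s1 s2 s3 :
  bal_equiv H s1 s2 -> bal_equiv H s2 s3 -> bal_equiv H s1 s3.
Proof.
case/bal_equivP => h hH -> /bal_equivP [h' h'H ->]; apply/bal_equivP.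
by exists (tmul h h'); rewrite ?tmul_on ?balance_mul.
Qed.

Definition bact g1 g2 s := ldact g1 (rdact g2 s).

Lemma bact_ldact g s : bact g 1 s = ldact g s.
Proof.
by congr ldact; apply/ffunP => j; rewrite ffunE; case: ifP; rewrite ?mulg1.
Qed.

Lemma bact_rdact g s : bact 1 g s = rdact g s.
Proof. by apply/ffunP => j; rewrite ffunE; case: ifP; rewrite ?mul1g. Qed.

Lemma entry_bact g1 g2 s j : (j < m)%N ->
  entry (bact g1 g2 s) j =
    (if j == 0%N then g1 else 1) * entry s j * (if j == m.-1 then g2 else 1).
Proof.
move=> jm; rewrite !(entry_ord _ jm) !ffunE.
by case: ifP; case: ifP; rewrite ?mulg1 ?mul1g ?mulgA.
Qed.

Lemma bactK g1 g2 s : bact g1^-1 g2^-1 (bact g1 g2 s) = s.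
Proof.
apply: entry_inj => j jm; rewrite !entry_bact //.
by case: ifP => _; case: ifP => _; rewrite ?mulg1 ?mul1g ?mulgA ?mulVg ?mul1g ?mulgK.
Qed.

Lemma balance_bact h g1 g2 s : balance h (bact g1 g2 s) = bact g1 g2 (balance h s).
Proof.
apply: entry_inj => j jm; rewrite entry_balance // !entry_bact // entry_balance //.
rewrite /lfac /rfac; have -> : (j.+1 < m)%N = (j != m.-1) by lia.
case: j {jm} => [|j] /=; case: eqP => _ /=;
  by rewrite ?invg1 ?mulg1 ?mul1g ?mulgA.
Qed.

Lemma bal_equiv_bact (H : {group gT}) g1 g2 s s' :
  bal_equiv H s s' -> bal_equiv H (bact g1 g2 s) (bact g1 g2 s').
Proof. by case/bal_equivP => h hH ->; apply/bal_equivP; exists h; rewrite ?balance_bact. Qed.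

End Tuples.

Section Span.
Variables (k : fieldType) (T R : finType) (w : R -> T -> k).
Implicit Types v : T -> k.
Local Open Scope ring_scope.

Lemma in_span_ext v1 v2 : v1 =1 v2 -> in_span w v1 -> in_span w v2.
Proof. by move=> e [c h]; exists c => t; rewrite -e h. Qed.

Lemma in_span0 v : v =1 (fun=> 0) -> in_span w v.
Proof. by move=> h; exists (fun=> 0) => t; rewrite h big1 // => r _; rewrite mul0r. Qed.

Lemma in_spanD v1 v2 : in_span w v1 -> in_span w v2 -> in_span w (fun t => v1 t + v2 t).
Proof.
move=> [c1 h1] [c2 h2]; exists (fun r => c1 r + c2 r) => t.
by rewrite h1 h2 -big_split; apply: eq_bigr => r _; rewrite mulrDl.
Qed.

Lemma in_spanZ a v : in_span w v -> in_span w (fun t => a * v t).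
Proof.
move=> [c h]; exists (fun r => a * c r) => t.
by rewrite h mulr_sumr; apply: eq_bigr => r _; rewrite mulrA.
Qed.

Lemma in_spanN v : in_span w v -> in_span w (fun t => - v t).
Proof. by move/(in_spanZ (-1)); apply: in_span_ext => t; rewrite mulN1r. Qed.

Lemma in_span_sum (I : finType) (P : pred I) (F : I -> T -> k) :
  (forall i, P i -> in_span w (F i)) -> in_span w (fun t => \sum_(i | P i) F i t).
Proof.
move=> FP; rewrite /index_enum; elim: (Finite.enum I) => [|i s IHs].
  by apply: in_span0 => t; rewrite big_nil.
case Pi: (P i); last by apply: in_span_ext IHs => t; rewrite big_cons Pi.
by apply: in_span_ext (in_spanD (FP i Pi) IHs) => t; rewrite big_cons Pi.
Qed.

Lemma in_span_gen r : in_span w (w r).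
Proof.
exists (fun r' => (r' == r)%:R) => t.
by rewrite (bigD1 r) //= eqxx mul1r big1 ?addr0 // => r' /negbTE ->; rewrite mul0r.
Qed.

End Span.

Section UnitVectors.
Variables (k : fieldType) (T : finType).
Implicit Types (s t : T) (sigma : T -> T).
Local Open Scope ring_scope.

Lemma sum_unitvM s (G : T -> k) : \sum_t unitv k s t * G t = G s.
Proof.
by rewrite (bigD1 s) //= /unitv eqxx mul1r big1 ?addr0 // => t /negbTE ->; rewrite mul0r.
Qed.

Lemma vmap_unitv (T' : finType) (F : T -> T' -> k) s (t : T') : vmap F (unitv k s) t = F s t.
Proof. exact: sum_unitvM. Qed.

Lemma bmap_unitv sigma s t : bmap sigma (unitv k s) t = unitv k (sigma s) t.
Proof.
rewrite /bmap /unitv; have [->|ne] := eqVneq t (sigma s).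
  by rewrite (bigD1 s) //= eqxx big1 ?addr0 // => t' /andP[_ /negbTE ->].
by rewrite big1 // => t' /eqP et; case: eqP => // e; rewrite -et e eqxx in ne.
Qed.

Lemma bmap_unitvZ sigma (c : k) s t :
  bmap sigma (fun t => c * unitv k s t) t = c * unitv k (sigma s) t.
Proof. by rewrite -bmap_unitv /bmap mulr_sumr. Qed.

Lemma eq_bmap sigma1 sigma2 (v : T -> k) t :
  sigma1 =1 sigma2 -> bmap sigma1 v t = bmap sigma2 v t.
Proof. by move=> e; apply: eq_bigl => t'; rewrite e. Qed.

Lemma bmapZ_sum sigma (I : finType) (P : pred I) (c : k) (f : I -> T -> k) t :
  bmap sigma (fun t => c * \sum_(i | P i) f i t) t = c * \sum_(i | P i) bmap sigma (f i) t.
Proof. by rewrite /bmap -mulr_sumr exchange_big. Qed.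

Lemma vmapZ_sum_unitv (T' I : finType) (G : T -> T' -> k) (P : pred I) (c : k)
    (d : I -> k) (x : I -> T) (t : T') :
  vmap G (fun s => c * \sum_(i | P i) d i * unitv k (x i) s) t
    = c * \sum_(i | P i) d i * G (x i) t.
Proof.
rewrite /vmap (eq_bigr (fun s => c * \sum_(i | P i) d i * (unitv k (x i) s * G s t))).
  by rewrite -mulr_sumr exchange_big; congr (_ * _); apply: eq_bigr => i _; rewrite -mulr_sumr sum_unitvM.
by move=> s _; rewrite -mulrA mulr_suml; congr (_ * _); apply: eq_bigr => i _; rewrite mulrA.
Qed.

End UnitVectors.

Local Open Scope ring_scope.

Section BalancingRelations.
Variables (gT : finGroupType) (H : {group gT}) (k : fieldType).

Definition tsingle m (i : nat) (x : gT) : tbasis gT m :=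
  [ffun j : 'I_m => if j == i :> nat then x else 1%g].

Lemma entry_tsingle m i x j :
  entry (tsingle m i x) j = if (j == i) && (j < m)%N then x else 1%g.
Proof. by rewrite (entry_ffun _ (fun n => if n == i then x else 1%g)); case: ifP; rewrite ?andbT ?andbF. Qed.

Lemma tsingle_on m i x : x \in H -> tsingle m i x \in ffun_on H.
Proof. by move=> xH; apply/ffun_onP => j; rewrite ffunE; case: ifP. Qed.

Lemma balance_tsingle m i y (s : tbasis gT m) : (i.+1 < m)%N ->
  balance (tsingle m i y) s =
  [ffun j : 'I_m => if j == i.+1 :> nat then (y^-1 * s j)%g
                    else if j == i :> nat then (s j * y)%g else s j].
Proof.
move=> im; apply/ffunP => j; rewrite !ffunE /lfac /rfac.
case: (nat_of_ord j) (ltn_ord j) => [|j'] jm /=; rewrite !entry_tsingle.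
  by case: i im => [|i] im; rewrite /= ?im ?jm ?if_same ?invg1 ?mul1g ?mulg1.
rewrite eqSS; have [<-|ne] := eqVneq j' i.
  by rewrite (gtn_eqF (ltnSn j')) (ltnW jm) /= if_same mulg1.
rewrite /= invg1 mul1g; have [ei|_] := eqVneq j'.+1 i; last by rewrite if_same mulg1.
have -> : (j'.+2 < m)%N by lia.
by rewrite jm.
Qed.

Lemma balance_tsingle_out m i y (s : tbasis gT m) : (m <= i.+1)%N ->
  balance (tsingle m i y) s = s.
Proof.
move=> mi; have r1 j : rfac (tsingle m i y) j = 1%g.
  rewrite /rfac; case: ifP => // jm; rewrite entry_tsingle.
  by have -> : (j == i) && (j < m)%N = false by lia.
apply/ffunP => j; rewrite !ffunE r1 mulg1 /lfac.
case: (nat_of_ord j) (ltn_ord j) => [|j'] jm; rewrite ?entry_tsingle ?invg1 ?mul1g //.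
have -> : (j' == i) && (j' < m)%N = false by lia.
by rewrite invg1 mul1g.
Qed.

Lemma tens_zero_balance_tsingle m i y (w : tbasis gT m) :
  y \in H -> tens_zero H (fun t => unitv k (balance (tsingle m i y) w) t - unitv k w t).
Proof.
move=> yH; case: (ltnP i.+1 m) => im; last first.
  by apply: in_span0 => t; rewrite balance_tsingle_out // subrr.
pose t0 : tbasis gT m := [ffun j : 'I_m => if j == i :> nat then (w j * y)%g else w j].
apply: in_span_ext (in_spanN (in_span_gen (@tens_rel k gT H m) (Ordinal (ltnW im), y^-1, t0)%g)).
move=> u; rewrite /tens_rel /= im groupV yH /=.
set t1 := [ffun j : 'I_m => _ ]; set t2 := [ffun j : 'I_m => _ ].
have -> : t1 = w.
  by apply/ffunP => j; rewrite /t1 /t0 !ffunE; case: ifP => ji; rewrite ji ?mulgK.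
have -> : t2 = balance (tsingle m i y) w.
  rewrite balance_tsingle //; apply/ffunP => j; rewrite /t2 /t0 !ffunE.
  by case: ifP => [/eqP ->|_] //; rewrite (gtn_eqF (ltnSn i)).
by rewrite opprB.
Qed.

Lemma tens_zero_balance m (h w : tbasis gT m) :
  h \in ffun_on H -> tens_zero H (fun t => unitv k (balance h w) t - unitv k w t).
Proof.
move=> hH; pose trunc n : tbasis gT m := [ffun j : 'I_m => if (j < n)%N then h j else 1%g].
suff /(_ m) : forall n, tens_zero H (fun t => unitv k (balance (trunc n) w) t - unitv k w t).
  by rewrite (_ : trunc m = h) //; apply/ffunP => j; rewrite ffunE ltn_ord.
elim=> [|n IHn].
  rewrite (_ : trunc 0 = tone _ _); last by apply/ffunP => j; rewrite !ffunE.
  by apply: in_span0 => t; rewrite balance1 subrr.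
have -> : trunc n.+1 = tmul (trunc n) (tsingle m n (entry h n)).
  apply/ffunP => j; rewrite !ffunE ltnS leq_eqVlt.
  case: (eqVneq (nat_of_ord j) n) => [e|ne] /=; last by rewrite mulg1.
  by rewrite e ltnn mul1g -e entryE.
rewrite -balance_mul.
have := tens_zero_balance_tsingle n (balance (trunc n) w) (entry_on n hH).
move/in_spanD/(_ IHn); apply: in_span_ext => t.
by rewrite addrA subrK.
Qed.

Lemma vmap_tens_rel m1 m2 (F : tbasis gT m1 -> tbasis gT m2 -> k) :
  (forall s h, h \in ffun_on H -> tens_zero H (fun t => F (balance h s) t - F s t)) ->
  forall r, tens_zero H (vmap F (@tens_rel k gT H m1 r)).
Proof.
move=> Fbal [[i x] t]; rewrite /tens_rel /=.
case: ifP => [/andP[im xH]|_]; last first.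
  by apply: in_span0 => u; rewrite /vmap big1 // => s _; rewrite mul0r.
set t1 := [ffun j : 'I_m1 => _ ]; set t2 := [ffun j : 'I_m1 => _ ].
have -> : t2 = balance (tsingle m1 i x^-1) t1.
  rewrite balance_tsingle //; apply/ffunP => j; rewrite /t1 /t2 !ffunE.
  case: ifP => [/eqP e|_]; last by case: ifP => ji; rewrite ?ji ?mulgK.
  by rewrite e (gtn_eqF (ltnSn i)) invgK.
apply: in_span_ext (in_spanN (Fbal t1 _ (tsingle_on m1 i (groupVr xH)))) => u.
rewrite /vmap (eq_bigr _ (fun s _ => mulrBl _ _ _)) sumrB !sum_unitvM.
by rewrite opprB.
Qed.

Lemma sum_balance_invariant m (G : tbasis gT m -> k) (d u : tbasis gT m) :
  d \in ffun_on H ->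
  \sum_(h | h \in ffun_on H) G (balance h (balance d u)) = \sum_(h | h \in ffun_on H) G (balance h u).
Proof.
move=> dH; rewrite [RHS](reindex_inj (@tmul_inj gT m d)) /=.
apply: eq_big => h; last by rewrite balance_mul.
apply/idP/idP => hH; first exact: tmul_on.
have -> : h = tmul (tinv d) (tmul d h).
  by apply/ffunP => j; rewrite !ffunE mulgA mulVg mul1g.
exact/tmul_on/hH/tinv_on.
Qed.

Lemma tens_hom_of_invariant m1 m2 (F : tbasis gT m1 -> tbasis gT m2 -> k) :
  (forall s h, h \in ffun_on H -> tens_zero H (fun t => F (balance h s) t - F s t)) ->
  (forall g1 g2 s, tens_zero H (fun t => F (bact g1 g2 s) t - bmap (bact g1 g2) (F s) t)) ->
  tens_hom H F.
Proof.
move=> Fbal Fbact; split; first exact: vmap_tens_rel.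
  move=> g s; apply: in_span_ext (Fbact g 1%g s) => t.
  by rewrite bact_ldact (eq_bmap _ _ (bact_ldact g)).
move=> g s; apply: in_span_ext (Fbact 1%g g s) => t.
by rewrite bact_rdact (eq_bmap _ _ (bact_rdact g)).
Qed.
End BalancingRelations.

Lemma mem_core_conjg (gT : finGroupType) (H : {group gT}) z x :
  (z \in \bigcap_(g : gT) H :^ g -> z ^ x \in H)%g.
Proof. by move/bigcapP/(_ x^-1%g isT); rewrite mem_conjg invgK. Qed.

Section Telescopes.
Variables (gT : finGroupType) (m : nat) (C : nat -> gT).
Local Open Scope group_scope.

Definition telescope a b : tbasis gT m :=
  [ffun j : 'I_m => (if j == 0 :> nat then a else 1) * ((C j.-1)^-1 * C j)
                    * (if j == m.-1 :> nat then b else 1)].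

Lemma entry_telescope a b j : (j < m)%N ->
  entry (telescope a b) j =
    (if j == 0%N then a else 1) * ((C j.-1)^-1 * C j) * (if j == m.-1 then b else 1).
Proof. by move=> jm; rewrite (entry_ord _ jm) ffunE. Qed.

Lemma telescope_bact g1 g2 a b : bact g1 g2 (telescope a b) = telescope (g1 * a) (b * g2).
Proof.
apply: entry_inj => j jm; rewrite entry_bact // !entry_telescope //.
by case: eqP => _; case: eqP => _; rewrite ?mulg1 ?mul1g ?mulgA.
Qed.

Hypotheses (C0 : C 0 = 1) (Clast : C m.-1 = 1) (m_gt1 : (1 < m)%N).

Lemma telescope_core_balance (H : {group gT}) a b z :
  z \in \bigcap_(g : gT) H :^ g ->
  exists2 h, h \in ffun_on H & telescope (a * z) (z^-1 * b) = balance h (telescope a b).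
Proof.
move=> zcore; exists [ffun j : 'I_m => z ^ C j].
  by apply/ffun_onP => j; rewrite ffunE mem_core_conjg.
apply: entry_inj => j jm; rewrite entry_balance // !entry_telescope // /lfac /rfac.
case: j jm => [|j] jm /=; rewrite !(entry_ffun _ (fun j => z ^ C j)).
  have -> : (0 == m.-1) = false by lia.
  by rewrite m_gt1 (ltnW m_gt1) C0 conjg1 !invg1 !mulg1 !mul1g.
rewrite (ltnW jm) jm; have [jl|jl] := eqVneq j.+1 m.-1.
  have -> : (j.+2 < m)%N = false by lia.
  by rewrite jl Clast conjgE !mulg1 !mul1g !invMg invgK !mulgA (mulgK (C j)).
have -> : (j.+2 < m)%N by lia.
by rewrite !mulg1 !mul1g !conjgE !invMg invgK !mulgA (mulgK (C j)) (mulgK (C j.+1)) mulgKV.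
Qed.

Lemma telescope_balance_eq a b a' b' h :
  telescope a' b' = balance h (telescope a b) ->
  [/\ a' = a * entry h 0, b' = (entry h 0)^-1 * b &
      forall j, (j < m.-1)%N -> C j * entry h j * (C j)^-1 = entry h 0].
Proof.
move=> e; have E j : (j < m)%N ->
    entry (telescope a' b') j = (lfac h j)^-1 * entry (telescope a b) j * rfac h j.
  by move=> jm; rewrite e entry_balance.
have conj_h j : (j < m.-1)%N -> C j * entry h j * (C j)^-1 = entry h 0.
  elim: j => [|j IHj] jm; first by rewrite C0 mul1g invg1 mulg1.
  have jm' : (j.+1 < m)%N by lia.
  move: (E j.+1 jm'); rewrite !entry_telescope // /lfac /rfac /=.
  have -> : (j.+1 == m.-1) = false by lia.
  have -> : (j.+2 < m)%N by lia.
  rewrite !mulg1 !mul1g -(IHj (ltnW jm)) => Ej.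
  have -> : C j.+1 * entry h j.+1 = C j * entry h j * ((C j)^-1 * C j.+1).
    by rewrite Ej !mulgA mulgK mulgV mul1g.
  by rewrite !mulgA mulgK.
have m_gt0 : (0 < m)%N by apply: ltnW.
move: (E 0%N m_gt0); rewrite !entry_telescope //= /rfac m_gt1 C0.
have -> : (0 == m.-1) = false by lia.
rewrite invg1 !mulg1 mul1g => ea.
have [n mn] : exists n, m.-1 = n.+1 by exists m.-2; lia.
have ml : (m.-1 < m)%N by rewrite ltn_predL.
move: (E m.-1 ml); rewrite !entry_telescope // /lfac /rfac mn /=.
rewrite eqxx (_ : (n.+2 < m)%N = false); last by lia.
rewrite -mn Clast !mulg1 !mul1g => eb.
split => //.
rewrite -(conj_h n); last by lia.
have -> : b' = C n * ((C n)^-1 * b') by rewrite mulKVg.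
by rewrite eb !invMg invgK !mulgA.
Qed.

End Telescopes.

Section InsertOne.
Variables (gT : finGroupType) (H : {group gT}) (k : fieldType) (n : nat).
Local Open Scope group_scope.

Definition insert1 (s : tbasis gT n.+2) : tbasis gT n.+3 :=
  [ffun j : 'I_n.+3 => if (j < n.+1)%N then entry s j
                       else if j == n.+1 :> nat then 1 else entry s n.+1].

Definition merge_last (u : tbasis gT n.+3) : tbasis gT n.+2 :=
  [ffun j : 'I_n.+2 => if (j < n.+1)%N then entry u j else entry u n.+1 * entry u n.+2].

Definition widen_bal (h : tbasis gT n.+2) : tbasis gT n.+3 :=
  [ffun j : 'I_n.+3 => if j == n.+1 :> nat then entry h n else entry h j].

Definition narrow_bal (h : tbasis gT n.+3) : tbasis gT n.+2 := [ffun j : 'I_n.+2 => entry h j].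

Lemma entry_insert1 s j : (j < n.+3)%N ->
  entry (insert1 s) j = if (j < n.+1)%N then entry s j
                        else if j == n.+1 then 1 else entry s n.+1.
Proof. by move=> jm; rewrite (entry_ord _ jm) ffunE. Qed.

Lemma entry_merge_last u j : (j < n.+2)%N ->
  entry (merge_last u) j = if (j < n.+1)%N then entry u j else entry u n.+1 * entry u n.+2.
Proof. by move=> jm; rewrite (entry_ord _ jm) ffunE. Qed.

Lemma entry_widen_bal h j :
  entry (widen_bal h) j = if j == n.+1 then entry h n else entry h j.
Proof.
case: (ltnP j n.+3) => jm; first by rewrite (entry_ord _ jm) ffunE.
have -> : (j == n.+1) = false by lia.
by rewrite !entry_ge //; apply: ltnW.
Qed.

Lemma entry_narrow_bal h j : (j < n.+2)%N -> entry (narrow_bal h) j = entry h j.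
Proof. by move=> jm; rewrite (entry_ord _ jm) ffunE. Qed.

Lemma widen_bal_on h : h \in ffun_on H -> widen_bal h \in ffun_on H.
Proof. by move=> hH; apply/ffun_onP => j; rewrite ffunE; case: ifP => _; apply: entry_on. Qed.

Lemma narrow_bal_on h : h \in ffun_on H -> narrow_bal h \in ffun_on H.
Proof. by move=> hH; apply/ffun_onP => j; rewrite ffunE; apply: entry_on. Qed.

Lemma insert1_balance h s : insert1 (balance h s) = balance (widen_bal h) (insert1 s).
Proof.
apply: entry_inj => j jm; rewrite entry_balance // !entry_insert1 // /lfac /rfac.
case: (ltngtP j n.+1) => [jn|jn|->].
- rewrite entry_balance ?(ltn_trans jn) // /lfac /rfac !entry_widen_bal.
  have -> : (j.+1 < n.+3)%N by lia. have -> : (j.+1 < n.+2)%N by lia.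
  have -> : (j == n.+1) = false by lia.
  case: j {jm} jn => [|j] jn //=; rewrite entry_widen_bal.
  by have -> : (j == n.+1) = false by lia.
- have -> : j = n.+2 by lia.
  by rewrite entry_balance // /lfac /rfac !entry_widen_bal /= eqxx !ltnn.
by rewrite /= !entry_widen_bal eqxx (ltn_eqF (ltnSn _)) ltnSn mulg1 mulVg.
Qed.

Lemma merge_last_balance h u : merge_last (balance h u) = balance (narrow_bal h) (merge_last u).
Proof.
apply: entry_inj => j jm; rewrite entry_balance // !entry_merge_last // /lfac /rfac.
case: ifP => jn.
  have jm3 : (j < n.+3)%N by lia.
  rewrite entry_balance // /lfac /rfac entry_narrow_bal //.
  have -> : (j.+1 < n.+3)%N by lia.
  have -> : (j.+1 < n.+2)%N by lia.
  by case: j {jm jm3} jn => [|j] jn //=; rewrite entry_narrow_bal //; lia.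
have -> : j = n.+1 by lia.
rewrite !entry_balance // /lfac /rfac !ltnn !entry_narrow_bal //= ltnSn.
by rewrite !mulg1 !mulgA mulgK.
Qed.

Lemma insert1_bact g1 g2 s : insert1 (bact g1 g2 s) = bact g1 g2 (insert1 s).
Proof.
apply: entry_inj => j jm; rewrite entry_bact // !entry_insert1 //=.
case: (ltngtP j n.+1) => [jn|jn|->]; last by rewrite /= (ltn_eqF (ltnSn _)) mulg1 mul1g.
  have -> : (j == n.+2) = false by lia.
  rewrite entry_bact /=; last by lia.
  by have -> : (j == n.+1) = false by lia.
have -> : j = n.+2 by lia.
by rewrite entry_bact //= ltnn (gtn_eqF (ltnSn _)) eqxx !mul1g.
Qed.

Lemma merge_last_bact g1 g2 u : merge_last (bact g1 g2 u) = bact g1 g2 (merge_last u).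
Proof.
apply: entry_inj => j jm; rewrite entry_bact // !entry_merge_last //=.
case: ifP => jn.
  have -> : (j == n.+1) = false by lia.
  rewrite entry_bact /=; last by lia.
  by have -> : (j == n.+2) = false by lia.
have -> : j = n.+1 by lia.
by rewrite !entry_bact //= !eqxx (ltn_eqF (ltnSn _)) !mul1g !mulg1 mulgA.
Qed.

Lemma merge_last_insert1 s : merge_last (insert1 s) = s.
Proof.
apply: entry_inj => j jm; have jm3 : (j < n.+3)%N by lia.
rewrite entry_merge_last // !entry_insert1 //.
case: ifP => jn; first by rewrite jn.
rewrite ltnn ltnNge leqnSn eqxx (gtn_eqF (ltnSn _)) mul1g.
by congr entry; lia.
Qed.

Local Open Scope ring_scope.

Lemma tens_summand_succ : tens_summand k H n.+2 n.+3.
Proof.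
exists 1%N, (fun _ s => unitv k (insert1 s)), (fun _ u => unitv k (merge_last u)).
split=> [_|_|s].
- apply: tens_hom_of_invariant => [s h hH|g1 g2 s].
    by rewrite insert1_balance; apply: tens_zero_balance (widen_bal_on hH).
  by apply: in_span0 => t; rewrite bmap_unitv insert1_bact subrr.
- apply: tens_hom_of_invariant => [u h hH|g1 g2 u].
    by rewrite merge_last_balance; apply: tens_zero_balance (narrow_bal_on hH).
  by apply: in_span0 => t; rewrite bmap_unitv merge_last_bact subrr.
by apply: in_span0 => t; rewrite big_ord1 vmap_unitv merge_last_insert1 subrr.
Qed.

End InsertOne.

(* Summing the separability element over its second coordinate gives a
   function on H that is constant by H-invariance and has total mass
   mu(e) = 1, so |H| times its value is 1. *)
Lemma grpalg_separable_card (gT : finGroupType) (H : {group gT}) (k : fieldType) :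
  grpalg_separable k H -> (#|H|%:R : k) != 0.
Proof.
case=> e [_ emu einv]; pose E1 x := \sum_(y in H) e x y.
have E1_const x : x \in H -> E1 x = E1 1%g.
  move=> xH; rewrite /E1 !(big_mkcond (mem H)) -(mulVg x) (reindex_inj (mulIg x^-1)%g) /=.
  apply: eq_bigr => y _; rewrite groupMr ?groupV //; case yH: (y \in H) => //.
  by rewrite einv.
have E1_sum : \sum_(x in H) E1 x = 1.
  have -> : 1 = \sum_z \sum_(x in H) \sum_(y in H | (x * y)%g == z) e x y :> k.
    rewrite (eq_bigr _ (fun z _ => emu z)) (bigD1 1%g) //= eqxx big1 ?addr0 //.
    by move=> z /negbTE ->.
  rewrite [RHS]exchange_big; apply: eq_bigr => x _.
  rewrite /E1 [RHS](exchange_big_dep (mem H)) /=; last by move=> z y _ /andP[].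
  apply: eq_bigr => y yH.
  by rewrite (big_pred1 (x * y)%g) // => z; rewrite yH eq_sym.
apply/eqP => H0; move: E1_sum.
by rewrite (eq_bigr _ E1_const) sumr_const -mulr_natl H0 mul0r => /esym/eqP; rewrite oner_eq0.
Qed.

Section CoreDecomposition.
Variables (gT : finGroupType) (H : {group gT}) (k : fieldType) (r : nat) (gs : 'I_r -> gT).
Hypothesis core_eq : (\bigcap_(g : gT) H :^ g = (\bigcap_(i < r) H :^ gs i) :&: H)%g.
Local Open Scope group_scope.

Definition twist (j : nat) : gT := if j is i.+1 then (oapp gs 1 (insub i))^-1 else 1.

Lemma twistS (i : 'I_r) : twist i.+1 = (gs i)^-1.
Proof. by rewrite /= valK. Qed.

Lemma twist_last : twist r.+1 = 1.
Proof. by rewrite /= insubN ?ltnn ?invg1. Qed.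

Lemma mem_core_twist z :
  (forall j, (j < r.+1)%N -> exists2 p, p \in H & z = twist j * p * (twist j)^-1) ->
  z \in \bigcap_(g : gT) H :^ g.
Proof.
move=> zP; rewrite core_eq inE; apply/andP; split.
  apply/bigcapP => i _; have [p pH ->] := zP i.+1 (ltn_ord i).
  by rewrite twistS invgK -mulgA -conjgE memJ_conjg.
by have [p pH ->] := zP 0%N isT; rewrite mul1g invg1 mulg1.
Qed.

(* a (x) gs_0^-1 (x) gs_0 gs_1^-1 (x) ... (x) gs_(r-2) gs_(r-1)^-1 (x) gs_(r-1) b *)
Definition twisted a b : tbasis gT r.+2 := telescope r.+2 twist a b.

Lemma twisted_bact g1 g2 a b : bact g1 g2 (twisted a b) = twisted (g1 * a) (b * g2).
Proof. exact: telescope_bact. Qed.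

Lemma twisted_equiv a b a' b' :
  bal_equiv H (twisted a b) (twisted a' b') ->
  exists2 z, z \in \bigcap_(g : gT) H :^ g & (a', b') = (a * z, z^-1 * b).
Proof.
case/bal_equivP => h hH.
case/(telescope_balance_eq (m := r.+2) (C := twist) (erefl _) twist_last isT) => -> -> conj_h.
exists (entry h 0) => //; apply: mem_core_twist => j jr.
by exists (entry h j); [apply: entry_on | rewrite conj_h].
Qed.

Definition prefix_prod (w : tbasis gT r.+1) (j : nat) : gT := \prod_(i < j) entry w i.

(* a (x) w_0 (x) ... (x) w_r (x) (w_0 ... w_r)^-1 b *)
Definition spread (w : tbasis gT r.+1) a b : tbasis gT r.+3 :=
  telescope r.+3 (fun j => if j == r.+2 then 1 else prefix_prod w j) a b.

Definition middle (v : tbasis gT r.+3) : tbasis gT r.+1 := [ffun j : 'I_r.+1 => entry v j.+1].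

Definition collapse (w : tbasis gT r.+1) (v : tbasis gT r.+3) : tbasis gT r.+2 :=
  twisted (entry v 0) (prefix_prod w r.+1 * entry v r.+2).

Lemma spread_bact w g1 g2 a b : bact g1 g2 (spread w a b) = spread w (g1 * a) (b * g2).
Proof. exact: telescope_bact. Qed.

Lemma middle_bact g1 g2 v : middle (bact g1 g2 v) = middle v.
Proof.
apply/ffunP => j; have jr := ltn_ord j.
rewrite !ffunE entry_bact /=; last by lia.
have -> : (j.+1 == r.+2) = false by lia.
by rewrite mulg1 mul1g.
Qed.

Lemma collapse_bact w g1 g2 v : collapse w (bact g1 g2 v) = bact g1 g2 (collapse w v).
Proof. by rewrite /collapse twisted_bact !entry_bact //= eqxx !mulg1 !mul1g mulgA. Qed.

Lemma spread_middle v :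
  spread (middle v) (entry v 0) (prefix_prod (middle v) r.+1 * entry v r.+2) = v.
Proof.
apply: entry_inj => j jr; rewrite entry_telescope //.
case: j jr => [|j] jr; first by rewrite /= /prefix_prod big_ord0 invg1 !mulg1.
rewrite /= mul1g /prefix_prod big_ord_recr /=.
have -> : (j == r.+2) = false by lia.
have [[->]|jl] := eqVneq j.+1 r.+2; first by rewrite mulg1 mulKg.
have jr' : (j < r.+1)%N by lia.
by rewrite mulg1 mulKg (entry_ord _ jr') ffunE.
Qed.

Lemma spread_core_balance w a b z : z \in \bigcap_(g : gT) H :^ g ->
  exists2 h, h \in ffun_on H & spread w (a * z) (z^-1 * b) = balance h (spread w a b).
Proof.
by apply: telescope_core_balance; rewrite /= ?eqxx // /prefix_prod big_ord0.
Qed.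

Local Open Scope ring_scope.

Definition project_middle (w : tbasis gT r.+1) (v : tbasis gT r.+3) : tbasis gT r.+2 -> k :=
  fun t => (middle v == w)%:R * unitv k (collapse w v) t.

Definition Phi w (u : tbasis gT r.+3) : tbasis gT r.+2 -> k :=
  fun t => (#|H| ^ r.+3)%:R^-1
           * \sum_(h : tbasis gT r.+3 | h \in ffun_on H) project_middle w (balance h u) t.

Definition Psi w (s : tbasis gT r.+2) : tbasis gT r.+3 -> k :=
  if [pick ab : gT * gT | bal_equiv H s (twisted ab.1 ab.2)] is Some (a, b)
  then unitv k (spread w a b) else fun=> 0.

Lemma Phi_hom w : tens_hom H (Phi w).
Proof.
apply: tens_hom_of_invariant => [u d dH|g1 g2 u]; apply: in_span0 => t.
  by rewrite /Phi (sum_balance_invariant (fun v => project_middle w v t)) // subrr.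
rewrite /Phi bmapZ_sum; apply/eqP; rewrite subr_eq0; apply/eqP; congr (_ * _).
apply: eq_bigr => h _.
by rewrite balance_bact /project_middle bmap_unitvZ middle_bact collapse_bact.
Qed.

Lemma Psi_equiv w s s' : bal_equiv H s s' -> Psi w s = Psi w s'.
Proof.
move=> ss'; rewrite /Psi (@eq_pick _ _ (fun ab => bal_equiv H s' (twisted ab.1 ab.2))) //.
move=> ab /=; apply/idP/idP; first exact: bal_equiv_trans (bal_equiv_sym ss').
exact: bal_equiv_trans ss'.
Qed.

Lemma Psi_cases w s :
  (exists a b, bal_equiv H s (twisted a b) /\ Psi w s = unitv k (spread w a b))
  \/ (forall a b, ~~ bal_equiv H s (twisted a b)) /\ Psi w s = fun=> 0.
Proof.
rewrite /Psi; case: pickP => [[a b] sab|none]; first by left; exists a, b.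
by right; split=> // a b; rewrite (none (a, b)).
Qed.

Lemma tens_zero_Psi w s a b : bal_equiv H s (twisted a b) ->
  tens_zero H (fun t => Psi w s t - unitv k (spread w a b) t).
Proof.
move=> sab; case: (Psi_cases w s) => [[a' [b' [sab' ->]]]|[none _]]; last first.
  by case/negP: (none a b).
have [z zcore [-> ->]] := twisted_equiv (bal_equiv_trans (bal_equiv_sym sab) sab').
have [h hH ->] := spread_core_balance w a b zcore.
exact: tens_zero_balance.
Qed.

Lemma Psi_hom w : tens_hom H (Psi w).
Proof.
apply: tens_hom_of_invariant => [s h hH|g1 g2 s].
  by apply: in_span0 => t; rewrite -(Psi_equiv w (bal_equiv_balance s hH)) subrr.
case: (Psi_cases w s) => [[a [b [sab ->]]]|[none ->]].
  have := bal_equiv_bact g1 g2 sab; rewrite twisted_bact => /(tens_zero_Psi w).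
  by apply: in_span_ext => t; rewrite bmap_unitv spread_bact.
case: (Psi_cases w (bact g1 g2 s)) => [[a [b [sab _]]]|[_ ->]].
  have := bal_equiv_bact g1^-1 g2^-1 sab; rewrite bactK twisted_bact.
  by rewrite (negbTE (none _ _)).
by apply: in_span0 => t; rewrite /bmap big1 ?subrr.
Qed.

Lemma Psi_middle u v : bal_equiv H u v ->
  tens_zero H (fun t => Psi (middle v) (collapse (middle v) v) t - unitv k u t).
Proof.
case/bal_equivP => h hH ->; set x := balance h u.
have := tens_zero_Psi (middle x) (bal_equiv_refl H (collapse (middle x) x)).
rewrite spread_middle => /in_spanD/(_ (tens_zero_balance k u hH)).
by apply: in_span_ext => t; rewrite addrA subrK.
Qed.

Lemma sum_Psi_Phi u : grpalg_separable k H ->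
  tens_zero H (fun t => \sum_(j < #|tbasis gT r.+1|)
                          vmap (Psi (enum_val j)) (Phi (enum_val j) u) t - unitv k u t).
Proof.
move=> Hsep; set c : k := (#|H| ^ r.+3)%:R^-1.
have := in_span_sum (P := fun h => h \in ffun_on H)
  (fun h hH => Psi_middle (bal_equiv_balance u hH)).
move/(in_spanZ c); apply: in_span_ext => t.
rewrite sumrB mulrBr sumr_const card_ffun_on card_ord -mulr_natl mulrA mulVf ?mul1r; last first.
  by rewrite natrX expf_neq0 // grpalg_separable_card.
congr (_ - _).
rewrite -(big_enum_val (fun w => vmap (Psi w) (Phi w u) t)) /=.
rewrite [RHS](eq_bigl (fun _ => true)) => [|w]; last by rewrite inE.
rewrite (eq_bigr _ (fun w _ => vmapZ_sum_unitv (Psi w) _ c (fun h => (middle (balance h u) == w)%:R) _ t)).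
rewrite -mulr_sumr exchange_big /=; congr (_ * _); apply: eq_bigr => h _.
rewrite (bigD1 (middle (balance h u))) //= eqxx mul1r big1 ?addr0 // => w /negbTE.
by rewrite eq_sym => ->; rewrite mul0r.
Qed.

Lemma tens_summand_core : grpalg_separable k H -> tens_summand k H r.+3 r.+2.
Proof.
move=> Hsep; exists #|tbasis gT r.+1|, (fun j => Phi (enum_val j)), (fun j => Psi (enum_val j)).
by split=> [j|j|u]; [exact: Phi_hom | exact: Psi_hom | exact: sum_Psi_Phi].
Qed.

End CoreDecomposition.

Theorem mainTheorem8 (gT : finGroupType) (H : {group gT}) (k : fieldType)
  (r : nat) (gs : 'I_r -> gT) :
  grpalg_separable k H ->
  (0 < r)%N ->
  (\bigcap_(g : gT) (H :^ g) = (\bigcap_(i < r) (H :^ gs i)) :&: H)%g ->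
  hdepth_le k H (2 * r + 3).
Proof.
(* The bound holds for r = 0 as well. *)
move=> Hsep _ core_eq; exists r.+2; split; [by [] | by rewrite -mul2n; lia | split].
  exact: tens_summand_succ.
exact: tens_summand_core core_eq Hsep.
Qed.
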